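(* Let $k_1,k_2$ be integers with $1\le k_1$ and $1<k_2$. Then for lines $L_1,L_2$ the following are equivalent: (i) $L_1\perp L_2$; (ii) there are $X_1\in\mathcal H_{k_1}$, $X_2\in\mathcal H_{k_2}$ such that $X_1\perp_x X_2$ and $L_i\subset X_i$ for $i=1,2$.
   Context: Let $V$ be a vector space over a field with a nondegenerate symmetric bilinear form $\xi$ having no isotropic vectors. Points are elements of $V$; (affine) subspaces are sets $p+W$ with $W$ a linear subspace, of dimension $\dim W$; lines are the $1$-dimensional subspaces. $\mathcal H_k$ is the family of $k$-dimensional subspaces. For nonempty subspaces $X,Y$: $X\perp Y$ iff $\xi(b-a,d-c)=0$ for all $a,b\in X$, $c,d\in Y$ (for lines this is the usual orthogonality of directions); $X\perp_x Y$ iff $X\perp Y$ and $X\cap Y\neq\emptyset$.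
   Formalization: V also contains $k_1+k_2$ linearly independent vectors, so $\dim V\ge k_1+k_2$. The statement above fails without it. *)

From mathcomp Require Import all_boot all_algebra.
Set Implicit Arguments. Unset Strict Implicit. Unset Printing Implicit Defensive.
Import GRing.Theory.
Local Open Scope ring_scope.

Section Geometry.
Variables (F : fieldType) (V : lmodType F) (xi : V -> V -> F).

Definition sym_bilin_form : Prop :=
  (forall a x y z, xi (a *: x + y) z = a * xi x z + xi y z) /\
  (forall x y, xi x y = xi y x).

Definition nondegen_form : Prop :=
  forall x, (forall y, xi x y = 0) -> x = 0.

Definition anisotropic_form : Prop :=
  forall x, xi x x = 0 -> x = 0.

Definition lin_indep (k : nat) (b : 'I_k -> V) : Prop :=
  forall c : 'I_k -> F, \sum_(i < k) c i *: b i = 0 -> forall i, c i = 0.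

Definition in_H (k : nat) (X : V -> Prop) : Prop :=
  exists (p : V) (b : 'I_k -> V), lin_indep b /\
    forall x, X x <-> exists c : 'I_k -> F, x = p + \sum_(i < k) c i *: b i.

Definition is_line_sub (L : V -> Prop) : Prop := in_H 1 L.

Definition sub_pts (X Y : V -> Prop) : Prop := forall x, X x -> Y x.

Definition perp_sub (X Y : V -> Prop) : Prop :=
  forall a b c d, X a -> X b -> Y c -> Y d -> xi (b - a) (d - c) = 0.

Definition perp_x (X Y : V -> Prop) : Prop :=
  perp_sub X Y /\ exists z, X z /\ Y z.

End Geometry.

(* After translating, L1 = p1 + F u1 and L2 = p2 + F u2 with xi u1 u2 = 0.
   Split p2 - p1 = al u1 + be u2 + ga r with r a nonzero vector orthogonal to
   u1 and u2.  Complete u1, u2, r to a family of k1 + k2 pairwise orthogonal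
   nonzero vectors (a vector orthogonal to fewer than k1 + k2 given vectors
   exists by a rank count), and let X1 be spanned at p1 by u1 and k1 - 1 of
   them, X2 at p2 by u2, r and the remaining k2 - 2.  By anisotropy such
   families are free, so X1 and X2 have the right dimensions; they are
   perpendicular, and p1 + al u1 = p2 - be u2 - ga r lies on both. *)

From mathcomp Require Import all_boot all_algebra zify.
Set Implicit Arguments. Unset Strict Implicit. Unset Printing Implicit Defensive.
Import GRing.Theory.
Local Open Scope ring_scope.

Section AffineSpan.
Variables (F : fieldType) (V : lmodType F).

Definition affine_span (p : V) (s : seq V) (x : V) : Prop :=
  exists c : 'I_(size s) -> F, x = p + \sum_i c i *: s`_i.

Lemma affine_span_cons p u s a y :
  affine_span p s (p + y) -> affine_span p (u :: s) (p + (a *: u + y)).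
Proof.
case=> c /addrI ->.
exists (fun i : 'I_(size s).+1 => if unlift ord0 i is Some j then c j else a).
rewrite big_ord_recl unlift_none; congr (p + (_ + _)).
by apply: eq_bigr => i _; rewrite liftK.
Qed.

Lemma affine_span_head p u s a : affine_span p (u :: s) (p + a *: u).
Proof.
rewrite -[a *: u]addr0; apply: affine_span_cons.
by exists (fun=> 0); rewrite big1 // => i _; rewrite scale0r.
Qed.

Lemma line_subP (L : V -> Prop) :
  is_line_sub L -> exists p u, u != 0 /\ forall x, L x <-> exists t, x = p + t *: u.
Proof.
case=> p [b [b_indep L_def]]; exists p, (b ord0); split.
  apply/eqP => b0; have := b_indep (fun=> 1).
  by rewrite big_ord1 b0 scaler0 => /(_ erefl ord0) /eqP; rewrite oner_eq0.
move=> x; rewrite L_def; split=> [[c ->]|[t ->]].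
  by exists (c ord0); rewrite big_ord1.
by exists (fun=> t); rewrite big_ord1.
Qed.

End AffineSpan.

Section SymmetricBilinearForm.
Variables (F : fieldType) (V : lmodType F) (xi : V -> V -> F).
Hypothesis xi_sym_bilin : sym_bilin_form xi.

Lemma formC x y : xi x y = xi y x.
Proof. by case: xi_sym_bilin. Qed.

Lemma formDl x y z : xi (x + y) z = xi x z + xi y z.
Proof. by case: xi_sym_bilin => lin _; have := lin 1 x y z; rewrite scale1r mul1r. Qed.

Lemma form0l z : xi 0 z = 0.
Proof. by apply: (addrI (xi 0 z)); rewrite -formDl !addr0. Qed.

Lemma formZl a x z : xi (a *: x) z = a * xi x z.
Proof. by case: xi_sym_bilin => lin _; rewrite -[a *: x]addr0 lin form0l addr0. Qed.

Lemma formBl x y z : xi (x - y) z = xi x z - xi y z.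
Proof. by rewrite formDl -scaleN1r formZl mulN1r. Qed.

Lemma form_suml (I : Type) (r : seq I) (P : pred I) (c : I -> F) (e : I -> V) z :
  xi (\sum_(i <- r | P i) c i *: e i) z = \sum_(i <- r | P i) c i * xi (e i) z.
Proof.
rewrite (big_morph (xi^~ z) (fun x y => formDl x y z) (form0l z)).
by apply: eq_bigr => i _; rewrite formZl.
Qed.

Definition orthogonal_family (s : seq V) : bool :=
  pairwise (fun x y => xi x y == 0) s && all (fun x => x != 0) s.

Lemma orthogonal_family_cat s1 s2 :
  orthogonal_family (s1 ++ s2) =
  [&& allrel (fun x y => xi x y == 0) s1 s2, orthogonal_family s1
    & orthogonal_family s2].
Proof.
rewrite /orthogonal_family pairwise_cat all_cat.
by case: allrel; case: pairwise; case: pairwise; case: all; case: all.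
Qed.

Lemma orthogonal_family_insert a c v :
  orthogonal_family (a ++ c) -> v != 0 -> all (fun x => xi v x == 0) (a ++ c) ->
  orthogonal_family (a ++ v :: c).
Proof.
rewrite /orthogonal_family => /andP[orth_ac nz_ac] nz_v orth_v.
rewrite all_cat /= nz_v -all_cat nz_ac andbT {nz_ac}.
elim: a orth_ac orth_v => [|x a IHa] /= ; first by move=> -> ->.
move=> /andP[orth_x orth_ac] /andP[orth_vx orth_v].
by rewrite IHa // andbT all_cat /= formC orth_vx -all_cat.
Qed.

Section Extension.
Variables (n : nat) (b : 'I_n -> V).
Hypothesis b_indep : lin_indep b.

(* The map v |-> (xi v x)_(x in s) sends the n-dimensional span of b to
   F^(size s), so it has a nonzero kernel when size s < n. *)
Lemma orthogonal_vector_exists s :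
  (size s < n)%N -> exists2 v, v != 0 & all (fun x => xi v x == 0) s.
Proof.
move=> lt_s_n; pose M : 'M[F]_(n, size s) := \matrix_(j, i) xi (b j) s`_i.
have : kermx M != 0.
  rewrite -mxrank_eq0 mxrank_ker subn_eq0 -ltnNge.
  exact: leq_ltn_trans (rank_leq_col M) lt_s_n.
case/rowV0Pn => c /sub_kermxP cM0 c_neq0.
exists (\sum_j c 0 j *: b j).
  apply: contra c_neq0 => /eqP comb0; apply/eqP/rowP => j.
  by rewrite mxE (b_indep comb0).
apply/allP => x /(nthP 0) [i lt_i_s <-]; rewrite form_suml.
have /rowP/(_ (Ordinal lt_i_s)) := cM0; rewrite !mxE => cM0_i.
by apply/eqP; rewrite -[RHS]cM0_i; apply: eq_bigr => j _; rewrite mxE.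
Qed.

Lemma orthogonal_family_extend a c m :
  orthogonal_family (a ++ c) -> (size a + size c + m <= n)%N ->
  exists2 t, size t = m & orthogonal_family (a ++ t ++ c).
Proof.
move=> orth_ac; elim: m => [|m IHm] le_n; first by exists [::].
have [|t size_t orth_atc] := IHm; first by apply: leq_trans le_n; rewrite addnS.
have [|v nz_v orth_v] := orthogonal_vector_exists (s := a ++ t ++ c).
  by rewrite !size_cat size_t; lia.
exists (v :: t); first by rewrite /= size_t.
exact: orthogonal_family_insert.
Qed.

Lemma orthogonal_family_extend2 a c m1 m2 :
  orthogonal_family (a ++ c) -> (size a + size c + m1 + m2 <= n)%N ->
  exists t1 t2, [/\ size t1 = m1, size t2 = m2
    & orthogonal_family ((a ++ t1) ++ (c ++ t2))].
Proof.
move=> orth_ac le_n.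
have [|t1 size_t1 orth_1] := orthogonal_family_extend orth_ac (m := m1).
  exact: leq_trans (leq_addr _ _) le_n.
have [||t2 size_t2] := orthogonal_family_extend (a := a ++ t1 ++ c) (c := [::]) (m := m2).
- by rewrite cats0.
- by rewrite !size_cat size_t1 /=; lia.
by rewrite cats0 -!catA => orth; exists t1, t2; rewrite -catA.
Qed.

End Extension.

Lemma perp_line_dir (L1 L2 : V -> Prop) p1 u1 p2 u2 :
  (forall x, L1 x <-> exists t, x = p1 + t *: u1) ->
  (forall x, L2 x <-> exists t, x = p2 + t *: u2) ->
  perp_sub xi L1 L2 -> xi u1 u2 = 0.
Proof.
move=> L1_def L2_def L12.
rewrite -(addKr p1 u1) -(addKr p2 u2) (addrC (- p1)) (addrC (- p2)).
by apply: L12; [apply/L1_def; exists 0|apply/L1_def; exists 1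
  |apply/L2_def; exists 0|apply/L2_def; exists 1]; rewrite ?scale0r ?addr0 ?scale1r.
Qed.

Lemma perp_affine_span p1 s1 p2 s2 :
  allrel (fun x y => xi x y == 0) s1 s2 ->
  perp_sub xi (affine_span p1 s1) (affine_span p2 s2).
Proof.
move=> /allrelP orth12 _ _ _ _ [ca ->] [cb ->] [cc ->] [cd ->].
rewrite (addrC p1 (\sum_i _)) (addrC p2 (\sum_i _)) !addrKA -!sumrB.
under eq_bigr do rewrite -scalerBl; rewrite form_suml big1 // => i _.
under eq_bigr do rewrite -scalerBl; rewrite formC form_suml big1 ?mulr0 // => j _.
by rewrite formC (eqP (orth12 _ _ (mem_nth 0 (ltn_ord i)) (mem_nth 0 (ltn_ord j)))) mulr0.
Qed.

Hypothesis xi_aniso : anisotropic_form xi.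

Lemma orthogonal_family_lin_indep s :
  orthogonal_family s -> lin_indep (fun i : 'I_(size s) => s`_i).
Proof.
case/andP => /(pairwiseP 0) orth_s /allP nz_s c comb0 j.
have /eqP : xi (\sum_i c i *: s`_i) s`_j = 0 by rewrite comb0 form0l.
rewrite form_suml (bigD1 j) //= big1 ?addr0 => [|i /negbTE neq_ij].
  rewrite mulf_eq0 => /orP[/eqP //|/eqP /xi_aniso s_j0].
  by have := nz_s _ (mem_nth 0 (ltn_ord j)); rewrite s_j0 eqxx.
apply/eqP; rewrite mulf_eq0; apply/orP; right.
case: (ltngtP i j) neq_ij => [lt_ij|lt_ji|/val_inj->]; rewrite ?eqxx //= => _.
  exact: orth_s (ltn_ord i) (ltn_ord j) lt_ij.
by rewrite formC; apply: orth_s (ltn_ord j) (ltn_ord i) lt_ji.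
Qed.

Lemma in_H_affine_span p s k :
  orthogonal_family s -> size s = k -> in_H k (affine_span p s).
Proof.
move=> orth_s <-; exists p, (fun i => s`_i); split=> [|x]; last exact: iff_refl.
exact: orthogonal_family_lin_indep.
Qed.

(* r is the residual of d after projecting onto u1 and u2, unless that
   residual vanishes; then any nonzero vector orthogonal to u1, u2 will do. *)
Lemma orthogonal_pair_completion n (b : 'I_n -> V) u1 u2 d :
  lin_indep b -> (2 < n)%N -> orthogonal_family [:: u1; u2] ->
  exists r al be ga, orthogonal_family [:: u1; u2; r] /\
    d = al *: u1 + (be *: u2 + ga *: r).
Proof.
move=> b_indep lt_2_n orth_u.
move: (orth_u); rewrite /orthogonal_family /= !andbT.
move=> /andP[/eqP u12 /andP[nz_u1 nz_u2]].
have xi_u1 : xi u1 u1 != 0 by apply: contra nz_u1 => /eqP /xi_aniso ->.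
have xi_u2 : xi u2 u2 != 0 by apply: contra nz_u2 => /eqP /xi_aniso ->.
pose al := xi d u1 / xi u1 u1; pose be := xi d u2 / xi u2 u2.
pose r := d - (al *: u1 + be *: u2).
have r_orth : all (fun x => xi r x == 0) [:: u1; u2].
  rewrite /= !formBl !formDl !formZl !divfK // (formC u2) u12.
  by rewrite !mulr0 addr0 add0r !subrr eqxx.
have d_def : d = al *: u1 + (be *: u2 + r) by rewrite addrA addrC subrK.
have orth_r v : v != 0 -> all (fun x => xi v x == 0) [:: u1; u2] ->
    orthogonal_family [:: u1; u2; v].
  exact: (@orthogonal_family_insert [:: u1; u2] [::]).
have [r0|nz_r] := eqVneq r 0.
  have [|v nz_v orth_v] := orthogonal_vector_exists b_indep (s := [:: u1; u2]) => //.
  by exists v, al, be, 0; split; [exact: orth_r | rewrite scale0r -r0].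
by exists r, al, be, 1; split; [exact: orth_r | rewrite scale1r].
Qed.

End SymmetricBilinearForm.

Theorem lemma2p3 (F : fieldType) (V : lmodType F) (xi : V -> V -> F)
  (Hbil : sym_bilin_form xi) (Hnd : nondegen_form xi)
  (Hani : anisotropic_form xi)
  (k1 k2 : nat) (Hk1 : (1 <= k1)%N) (Hk2 : (1 < k2)%N)
  (Hdim : exists b : 'I_(k1 + k2) -> V, lin_indep b)
  (L1 L2 : V -> Prop) (HL1 : is_line_sub L1) (HL2 : is_line_sub L2) :
  perp_sub xi L1 L2 <->
  exists X1 X2 : V -> Prop,
    [/\ in_H k1 X1, in_H k2 X2, perp_x xi X1 X2, sub_pts L1 X1 & sub_pts L2 X2].
Proof.
split=> [L12|]; last first.
  by case=> X1 [X2 [_ _ [X12 _] L1X1 L2X2]] a b c d *; apply: X12; auto.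
have [p1 [u1 [nz_u1 L1_def]]] := line_subP HL1.
have [p2 [u2 [nz_u2 L2_def]]] := line_subP HL2.
have orth_u : orthogonal_family xi [:: u1; u2].
  by rewrite /orthogonal_family /= (perp_line_dir L1_def L2_def L12) eqxx nz_u1 nz_u2.
case: Hdim => b b_indep.
have [|r [al [be [ga [orth3 p21]]]]] :=
  orthogonal_pair_completion Hbil Hani (p2 - p1) b_indep _ orth_u; first by lia.
have [|t1 [t2 [size_t1 size_t2]]] := orthogonal_family_extend2 Hbil b_indep
    (a := [:: u1]) (c := [:: u2; r]) (m1 := k1.-1) (m2 := k2 - 2) orth3.
  by rewrite /=; lia.
rewrite orthogonal_family_cat => /and3P[orth12 orth_s1 orth_s2].
exists (affine_span p1 (u1 :: t1)), (affine_span p2 (u2 :: r :: t2)); split.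
- by apply: in_H_affine_span orth_s1 _ => //=; rewrite size_t1; lia.
- by apply: in_H_affine_span orth_s2 _ => //=; rewrite size_t2; lia.
- split; first exact: perp_affine_span.
  exists (p1 + al *: u1); split; first exact: affine_span_head.
  have -> : p1 + al *: u1 = p2 + (- be *: u2 + - ga *: r).
    by rewrite -[p2](subrK p1) p21 !scaleNr -opprD addrAC addrK addrC.
  by apply: affine_span_cons; apply: affine_span_head.
- by move=> x /L1_def[t ->]; apply: affine_span_head.
- by move=> x /L2_def[t ->]; apply: affine_span_head.
Qed.
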